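(* Let $(x_k)_{k\ge0}$ be indeterminates, define $a_n=x_n$ if $n=2^k-1$ for some integer $k\ge0$ and $a_n=0$ otherwise, let $D(n)=\det\left(a_{i+j+1}\right)_{i,j=0}^{n-1}$ with $D(0)=1$, and let $T_n=\frac{D(n)D(n+2)}{D(n+1)^2}$ (in the field of rational functions). Then for all $n\ge0$, $$T_{2n+1}=-T_{2n},\qquad T_{4n}=(-1)^n\frac{x_3}{x_1},$$ and for all $k\ge2$ and $n\ge0$, $$T_{2^{k+1}n+2^k-1}=(-1)^n\frac{x_1x_{2^{k+1}-1}}{x_{2^k-1}^2}.$$ *)

From HB Require Import structures.
From mathcomp Require Import all_boot all_order all_algebra.
From mathcomp Require Import mpoly.
Set Implicit Arguments. Unset Strict Implicit. Unset Printing Implicit Defensive.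
Import Order.TTheory GRing.Theory Num.Theory.
Local Open Scope ring_scope.

Definition RatF (N : nat) := {fraction {mpoly int[N]}}.

(* The indeterminate x_k, viewed in RatF N (only meaningful for k < N;
   it is 0 otherwise, and the theorem only uses k < N). *)
Definition xvar (N k : nat) : RatF N :=
  match @insub nat (fun i => i < N)%N 'I_N k with
  | Some i => tofrac ('X_i : {mpoly int[N]})
  | None => 0
  end.

Definition is_pow2m1 (n : nat) : bool := [exists k : 'I_n.+2, n.+1 == 2 ^ k]%N.

Definition aseq (N n : nat) : RatF N := if is_pow2m1 n then xvar N n else 0.

Definition Dh (N n : nat) : RatF N := \det (\matrix_(i < n, j < n) aseq N (i + j + 1)%N).

Definition Th (N n : nat) : RatF N := Dh N n * Dh N n.+2 / (Dh N n.+1) ^+ 2.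

(* Listing the even indices before the odd ones turns a Hankel determinant
   into a 2 x 2 block determinant.  For sequences supported on the indices
   2^k - 1 (or 2^k - 2) a diagonal or an off-diagonal block vanishes, and the
   determinant of order n factors into Hankel determinants of order about n/2
   of subsequences of the same two shapes.  Hence, for nonzero x_k, these
   determinants never vanish, and the ratios D(n+1)/D(n), of which T_n is a
   quotient, obey halving recurrences; iterating them along
   n = 2^k (2m + 1) - 1 gives the closed forms. *)

From HB Require Import structures.
From mathcomp Require Import all_boot all_order all_algebra perm.
From mathcomp Require Import zify ring.
From mathcomp Require Import mpoly.
Set Implicit Arguments. Unset Strict Implicit. Unset Printing Implicit Defensive.
Import Order.TTheory GRing.Theory Num.Theory.
Local Open Scope ring_scope.

Section Interleave.

Variables m1 m2 : nat.
Hypothesis m12 : (m2 <= m1 <= m2.+1)%N.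

Definition interleave_val (i : 'I_(m1 + m2)) : nat :=
  match split i with inl a => (2 * a)%N | inr b => (2 * b + 1)%N end.

Lemma interleave_subproof i : (interleave_val i < m1 + m2)%N.
Proof.
rewrite /interleave_val; case: splitP => [a|b] _.
  by have := ltn_ord a; move: m12 => /andP[]; lia.
by have := ltn_ord b; move: m12 => /andP[]; lia.
Qed.

Definition interleave i : 'I_(m1 + m2) := Ordinal (interleave_subproof i).

Lemma interleave_lshift a : interleave (lshift m2 a) = (2 * a)%N :> nat.
Proof. by rewrite /= /interleave_val (unsplitK (inl _ a)). Qed.

Lemma interleave_rshift b : interleave (rshift m1 b) = (2 * b + 1)%N :> nat.
Proof. by rewrite /= /interleave_val (unsplitK (inr _ b)). Qed.

Lemma interleave_inj : injective interleave.
Proof.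
move=> x y; rewrite -[x]splitK -[y]splitK.
case: (split x) => a; case: (split y) => b /(congr1 (@nat_of_ord _));
  rewrite ?interleave_lshift ?interleave_rshift => e; try lia.
all: by congr (unsplit (_ _)); apply: val_inj => /=; lia.
Qed.

End Interleave.

Section HankelDeterminant.

Variable R : comNzRingType.

Definition hankel (s : nat -> R) n : R := \det (\matrix_(i < n, j < n) s (i + j)%N).

Lemma eq_hankel (s s' : nat -> R) n : s =1 s' -> hankel s n = hankel s' n.
Proof. by move=> e; congr (\det _); apply/matrixP => i j; rewrite !mxE. Qed.

Lemma hankel0 (s : nat -> R) : hankel s 0 = 1.
Proof. exact: det_mx00. Qed.

Lemma det_mxsub_inj n (f : 'I_n -> 'I_n) (A : 'M[R]_n) :
  injective f -> \det (mxsub f f A) = \det A.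
Proof.
move=> f_inj; have -> : mxsub f f A = row_perm (perm f_inj) (col_perm (perm f_inj) A).
  by apply/matrixP => i j; rewrite !mxE !permE.
rewrite row_permE col_permE !det_mulmx !det_perm odd_permV mulrCA.
by rewrite -signr_addb addbb mulr1.
Qed.

Lemma det_block_swap m : \det (block_mx 0 1%:M 1%:M 0 : 'M[R]_(m + m)) = (-1) ^+ m.
Proof.
have -> : (block_mx 0 1%:M 1%:M 0 : 'M[R]_(m + m)) =
  block_mx 1%:M 1%:M 0 1%:M *m block_mx 1%:M 0 (- 1%:M) 1%:M *m
  block_mx 1%:M 1%:M 0 1%:M *m block_mx (- 1%:M) 0 0 1%:M.
  rewrite !mulmx_block !(mulmx1, mul1mx, mul0mx, mulmx0, addr0, add0r, mulmxN, mulNmx).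
  by rewrite subrr oppr0 add0r opprK addNr.
rewrite !det_mulmx !det_ublock det_lblock -scaleN1r detZ !det1 !mulr1 !mul1r.
by [].
Qed.

Lemma det_block_mx_dr0 m (E M N : 'M[R]_m) :
  \det (block_mx E M N 0) = (-1) ^+ m * (\det M * \det N).
Proof.
have -> : block_mx E M N 0 = block_mx M E 0 N *m block_mx 0 1%:M 1%:M 0.
  by rewrite mulmx_block !(mulmx1, mul1mx, mul0mx, mulmx0, addr0, add0r).
by rewrite det_mulmx det_ublock det_block_swap mulrC.
Qed.

Lemma hankel_parity_blocks (s : nat -> R) m1 m2 : (m2 <= m1 <= m2.+1)%N ->
  hankel s (m1 + m2) =
  \det (block_mx (\matrix_(a < m1, b < m1) s (2 * (a + b))%N)
                 (\matrix_(a < m1, b < m2) s (2 * (a + b) + 1)%N)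
                 (\matrix_(a < m2, b < m1) s (2 * (a + b) + 1)%N)
                 (\matrix_(a < m2, b < m2) s (2 * (a + b) + 2)%N)).
Proof.
move=> m12; rewrite /hankel -(det_mxsub_inj _ (@interleave_inj _ _ m12)).
congr (\det _); apply/matrixP => i j; rewrite -[i]splitK -[j]splitK.
case: (split i) => a; case: (split j) => b;
  rewrite ?block_mxEul ?block_mxEur ?block_mxEdl ?block_mxEdr !mxE
          ?interleave_lshift ?interleave_rshift; congr s; lia.
Qed.

Lemma hankel_mul_of_odd0 (s : nat -> R) m1 m2 : (m2 <= m1 <= m2.+1)%N ->
  (forall k, s (2 * k + 1)%N = 0) ->
  hankel s (m1 + m2) = hankel (fun k => s (2 * k)%N) m1 * hankel (fun k => s (2 * k + 2)%N) m2.
Proof.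
move=> m12 s_odd; rewrite hankel_parity_blocks //.
have odd0 p q : \matrix_(a < p, b < q) s (2 * (a + b) + 1)%N = 0.
  by apply/matrixP => a b; rewrite !mxE s_odd.
rewrite !odd0 det_ublock.
by congr (\det _ * \det _); apply/matrixP => a b; rewrite !mxE; congr s; lia.
Qed.

Lemma hankel_sqr_of_evenS0 (s : nat -> R) m : (forall k, s (2 * k + 2)%N = 0) ->
  hankel s (m + m) = (-1) ^+ m * hankel (fun k => s (2 * k + 1)%N) m ^+ 2.
Proof.
move=> s_even; rewrite hankel_parity_blocks ?leqnn ?leqnSn //.
have -> : \matrix_(a < m, b < m) s (2 * (a + b) + 2)%N = 0.
  by apply/matrixP => a b; rewrite !mxE s_even.
by rewrite det_block_mx_dr0 -expr2.
Qed.

Lemma hankel_head (s : nat -> R) p :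
  hankel s p.+1 =
  hankel (fun k => if k == 0%N then 0 else s k) p.+1 + s 0%N * hankel (fun k => s k.+2) p.
Proof.
rewrite /hankel !(expand_det_row _ ord0) !big_ord_recl.
set A := \matrix_(i, j) _; set B := \matrix_(i, j) _.
have cofAB j : cofactor A ord0 j = cofactor B ord0 j.
  rewrite /cofactor; congr (_ * \det _); apply/matrixP => a b.
  by rewrite !mxE lift0 /= addSn.
have -> : \sum_(i < p) A ord0 (lift ord0 i) * cofactor A ord0 (lift ord0 i) =
    \sum_(i < p) B ord0 (lift ord0 i) * cofactor B ord0 (lift ord0 i).
  by apply: eq_bigr => i _; rewrite cofAB !mxE lift0 /= addnS.
rewrite cofAB [B ord0 ord0]mxE [A ord0 ord0]mxE /= mul0r add0r addrC add0n.
congr (_ + _ * _); rewrite /cofactor /= expr0 mul1r; congr (\det _).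
by apply/matrixP => a b; rewrite !mxE !lift0 addSn addnS.
Qed.

End HankelDeterminant.

Lemma det_mulmx_inner_lt (R : fieldType) n k (X : 'M[R]_(n, k)) (Y : 'M[R]_(k, n)) :
  (k < n)%N -> \det (X *m Y) = 0.
Proof.
move=> lt_kn; apply/eqP; apply: contraT => nz.
have XY_unit : X *m Y \in unitmx by rewrite unitmxE unitfE.
have := mxrank_unit XY_unit; have := mxrankM_maxl X Y; have := rank_leq_col X.
lia.
Qed.

Lemma hankel_eq0_of_even0 (R : fieldType) (s : nat -> R) m :
  (forall k, s (2 * k)%N = 0) -> hankel s (m.+1 + m) = 0.
Proof.
move=> s_even; rewrite hankel_parity_blocks ?leqnn ?leqnSn //.
have -> : \matrix_(a < m.+1, b < m.+1) s (2 * (a + b))%N = 0.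
  by apply/matrixP => a b; rewrite !mxE s_even.
have -> : \matrix_(a < m, b < m) s (2 * (a + b) + 2)%N = 0.
  by apply/matrixP => a b; rewrite !mxE (_ : 2 * (a + b) + 2 = 2 * (a + b).+1)%N ?s_even //; lia.
set M := \matrix_(a, b) _; set N := \matrix_(a, b) _.
have -> : block_mx 0 M N 0 = block_mx M 0 0 1%:M *m (block_mx 0 1%:M N 0 : 'M_(m + m, m.+1 + m)).
  by rewrite mulmx_block !(mulmx1, mul1mx, mul0mx, mulmx0, addr0, add0r).
by apply: det_mulmx_inner_lt; lia.
Qed.

Lemma is_pow2m1P n : reflect (exists k, n.+1 = 2 ^ k)%N (is_pow2m1 n).
Proof.
apply: (iffP existsP) => [[k /eqP e]|[k e]]; first by exists k.
have lt_k : (k < n.+2)%N by rewrite e ltnS ltnW // ltn_expl.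
by exists (Ordinal lt_k); rewrite /= e.
Qed.

Lemma is_pow2m1_0 : is_pow2m1 0.
Proof. by apply/is_pow2m1P; exists 0%N. Qed.

Lemma is_pow2m1_even k : is_pow2m1 (2 * k + 2) = false.
Proof.
apply/is_pow2m1P => -[[|j] e]; first by rewrite expn0 in e; lia.
by move/(congr1 odd): e; rewrite expnS oddM /= addn2 /= mul2n odd_double.
Qed.

Lemma is_pow2m1_odd k : is_pow2m1 (2 * k + 1) = is_pow2m1 k.
Proof.
apply/is_pow2m1P/is_pow2m1P => -[j e].
  by case: j e => [|j] e; [rewrite expn0 in e; lia | exists j; rewrite expnS in e; lia].
by exists j.+1; rewrite expnS; lia.
Qed.

Lemma even_or_odd_split n : exists k, n = (k + k)%N \/ n = (k.+1 + k)%N.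
Proof.
exists n./2; have := odd_double_half n; rewrite -addnn.
by case: (odd n) => /= e; [right|left]; lia.
Qed.

Section LacunaryHankel.

Variable R : fieldType.
Implicit Types v w : nat -> R.

(* For [v m = x_(m+1)], [pow2m2_seq v m] is a_(m+1), so D(n) = [hankelB v n] and T_n = [quotB v n]. *)
Definition pow2m1_seq v m := if is_pow2m1 m then v m else 0.
Definition pow2m2_seq v m := if is_pow2m1 m.+1 then v m else 0.

Definition hankelA v n := hankel (pow2m1_seq v) n.
Definition hankelB v n := hankel (pow2m2_seq v) n.

Lemma eq_hankelA v v' n : v =1 v' -> hankelA v n = hankelA v' n.
Proof. by move=> e; apply: eq_hankel => k; rewrite /pow2m1_seq e. Qed.

Lemma eq_hankelB v v' n : v =1 v' -> hankelB v n = hankelB v' n.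
Proof. by move=> e; apply: eq_hankel => k; rewrite /pow2m2_seq e. Qed.

Lemma hankelB_parity v w1 w2 m1 m2 : (m2 <= m1 <= m2.+1)%N ->
  w1 =1 (fun m => v (2 * m)%N) -> w2 =1 (fun m => v (2 * m + 2)%N) ->
  hankelB v (m1 + m2) = hankelA w1 m1 * hankelB w2 m2.
Proof.
move=> m12 e1 e2; rewrite /hankelB hankel_mul_of_odd0 //; last first.
  by move=> k; rewrite /pow2m2_seq addn1 -addn2 is_pow2m1_even.
congr (_ * _); apply: eq_hankel => k; rewrite /pow2m1_seq /pow2m2_seq.
  by rewrite -addn1 is_pow2m1_odd e1.
by rewrite (_ : (2 * k + 2).+1 = 2 * k.+1 + 1)%N ?is_pow2m1_odd ?e2 //; lia.
Qed.

Lemma hankelB_even v w1 w2 n :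
  w1 =1 (fun m => v (2 * m)%N) -> w2 =1 (fun m => v (2 * m + 2)%N) ->
  hankelB v (n + n) = hankelA w1 n * hankelB w2 n.
Proof. by apply: hankelB_parity; rewrite leqnn leqnSn. Qed.

Lemma hankelB_odd v w1 w2 n :
  w1 =1 (fun m => v (2 * m)%N) -> w2 =1 (fun m => v (2 * m + 2)%N) ->
  hankelB v (n.+1 + n) = hankelA w1 n.+1 * hankelB w2 n.
Proof. by apply: hankelB_parity; rewrite leqnSn leqnn. Qed.

Lemma hankelA_even v w n : w =1 (fun m => v (2 * m + 1)%N) ->
  hankelA v (n + n) = (-1) ^+ n * hankelA w n ^+ 2.
Proof.
move=> e; rewrite /hankelA hankel_sqr_of_evenS0; last by move=> k; rewrite /pow2m1_seq is_pow2m1_even.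
by congr (_ * _ ^+ 2); apply: eq_hankel => k; rewrite /pow2m1_seq is_pow2m1_odd e.
Qed.

(* Expanding along the first row isolates [v 0]; what remains has vanishing even entries. *)
Lemma hankelA_odd v w n : w =1 (fun m => v (2 * m + 3)%N) ->
  hankelA v (n.+1 + n) = v 0%N * (-1) ^+ n * hankelB w n ^+ 2.
Proof.
move=> e; rewrite /hankelA addSn hankel_head -addSn hankel_eq0_of_even0 ?add0r; last first.
  move=> [|k] //; rewrite /pow2m1_seq (_ : 2 * k.+1 = 2 * k + 2)%N ?is_pow2m1_even //.
    by case: ifP.
  by lia.
rewrite hankel_sqr_of_evenS0; last first.
  by move=> k; rewrite /pow2m1_seq (_ : (2 * k + 2).+2 = 2 * k.+1 + 2)%N ?is_pow2m1_even //; lia.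
rewrite /pow2m1_seq is_pow2m1_0 mulrA; congr (_ * _ ^+ 2); apply: eq_hankel => k.
rewrite /pow2m2_seq (_ : (2 * k + 1).+2 = 2 * k.+1 + 1)%N ?is_pow2m1_odd ?e; last by lia.
by congr (if _ then v _ else _); lia.
Qed.

Lemma hankelAB_neq0 v n : (forall m, v m != 0) -> hankelA v n != 0 /\ hankelB v n != 0.
Proof.
elim/ltn_ind: n v => n IH v hv.
have IHA k (u : nat -> R) f : (k < n)%N -> (forall m, u m != 0) ->
    hankelA (fun m => u (f m)) k != 0.
  by move=> lt_kn hu; case: (IH k lt_kn _ (fun m => hu (f m))).
have IHB k (u : nat -> R) f : (k < n)%N -> (forall m, u m != 0) ->
    hankelB (fun m => u (f m)) k != 0.
  by move=> lt_kn hu; case: (IH k lt_kn _ (fun m => hu (f m))).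
have hA (u : nat -> R) : (forall m, u m != 0) -> hankelA u n != 0.
  move=> hu; have [k [e|e]] := even_or_odd_split n; rewrite e.
    case: k e => [|k] e; first by rewrite /hankelA hankel0 oner_eq0.
    rewrite (@hankelA_even _ (fun m => u (2 * m + 1)%N)) //.
    by rewrite mulf_neq0 ?signr_eq0 ?expf_neq0 ?IHA //; lia.
  rewrite (@hankelA_odd _ (fun m => u (2 * m + 3)%N)) //.
  by rewrite !mulf_neq0 ?signr_eq0 ?expf_neq0 ?IHB //; lia.
split; first exact: hA.
have [k [e|e]] := even_or_odd_split n; rewrite e.
  case: k e => [|k] e; first by rewrite /hankelB hankel0 oner_eq0.
  rewrite (@hankelB_even _ (fun m => v (2 * m)%N) (fun m => v (2 * m + 2)%N)) //.
  by rewrite mulf_neq0 ?IHA ?IHB //; lia.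
rewrite (@hankelB_odd _ (fun m => v (2 * m)%N) (fun m => v (2 * m + 2)%N)) //.
rewrite mulf_neq0 ?IHB //; last by lia.
have : (k.+1 < n \/ k.+1 = n)%N by lia.
by case=> [lt_kn | ->]; [apply: IHA | apply: hA].
Qed.

Lemma hankelA_neq0 v n : (forall m, v m != 0) -> hankelA v n != 0.
Proof. by move=> hv; case: (hankelAB_neq0 n hv). Qed.

Lemma hankelB_neq0 v n : (forall m, v m != 0) -> hankelB v n != 0.
Proof. by move=> hv; case: (hankelAB_neq0 n hv). Qed.

Lemma hankelA_mulS v n :
  hankelA v n * hankelA v n.+1 = (-1) ^+ n * v 0%N * hankelB (fun m => v m.+1) n ^+ 2.
Proof.
have [k [->|->]] := even_or_odd_split n.
  rewrite (@hankelA_even _ (fun m => v (2 * m + 1)%N)) // -addSn.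
  rewrite (@hankelA_odd _ (fun m => v (2 * m + 3)%N)) //.
  rewrite (@hankelB_even _ (fun m => v (2 * m + 1)%N) (fun m => v (2 * m + 3)%N));
    try by move=> m; congr v; lia.
  by rewrite exprD -signr_odd; case: (odd k); rewrite ?expr0 ?expr1; ring.
rewrite (@hankelA_odd _ (fun m => v (2 * m + 3)%N)) //.
rewrite (_ : (k.+1 + k).+1 = k.+1 + k.+1)%N; last by lia.
rewrite (@hankelA_even _ (fun m => v (2 * m + 1)%N)) //.
rewrite (@hankelB_odd _ (fun m => v (2 * m + 1)%N) (fun m => v (2 * m + 3)%N));
  try by move=> m; congr v; lia.
by rewrite !exprD !exprS -signr_odd; case: (odd k); rewrite ?expr0 ?expr1; ring.
Qed.

Lemma hankelB_shift_sqr v n : v 0%N != 0 ->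
  hankelB (fun m => v m.+1) n ^+ 2 = hankelA v n * hankelA v n.+1 / ((-1) ^+ n * v 0%N).
Proof. by move=> v0; rewrite hankelA_mulS; field; rewrite signr_eq0 v0. Qed.

Definition ratioA v n := hankelA v n.+1 / hankelA v n.
Definition ratioB v n := hankelB v n.+1 / hankelB v n.

Definition quotB v n := hankelB v n * hankelB v n.+2 / hankelB v n.+1 ^+ 2.

Lemma eq_ratioA v v' n : v =1 v' -> ratioA v n = ratioA v' n.
Proof. by move=> e; rewrite /ratioA !(eq_hankelA _ e). Qed.

Lemma eq_ratioB v v' n : v =1 v' -> ratioB v n = ratioB v' n.
Proof. by move=> e; rewrite /ratioB !(eq_hankelB _ e). Qed.

Lemma ratioA_neq0 v n : (forall m, v m != 0) -> ratioA v n != 0.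
Proof. by move=> hv; rewrite mulf_neq0 ?invr_eq0 ?hankelA_neq0. Qed.

Lemma ratioB_neq0 v n : (forall m, v m != 0) -> ratioB v n != 0.
Proof. by move=> hv; rewrite mulf_neq0 ?invr_eq0 ?hankelB_neq0. Qed.

Lemma quotB_ratioB v n : (forall m, v m != 0) -> quotB v n = ratioB v n.+1 / ratioB v n.
Proof.
by move=> hv; rewrite /quotB /ratioB; field; rewrite !hankelB_neq0.
Qed.

Lemma ratioB_even v w n : (forall m, v m != 0) -> w =1 (fun m => v (2 * m)%N) ->
  ratioB v (n + n) = ratioA w n.
Proof.
move=> hv e; set w2 := fun m => v (2 * m + 2)%N.
have hw m : w m != 0 by rewrite e.
rewrite /ratioB /ratioA -addSn (@hankelB_odd v w w2) // (@hankelB_even v w w2) //.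
by field; rewrite hankelA_neq0 // (hankelB_neq0 _ (fun m => hv _)).
Qed.

Lemma ratioB_odd v w n : (forall m, v m != 0) -> w =1 (fun m => v (2 * m + 2)%N) ->
  ratioB v (n.+1 + n) = ratioB w n.
Proof.
move=> hv e; set w1 := fun m => v (2 * m)%N.
have hw m : w m != 0 by rewrite e.
rewrite /ratioB (_ : (n.+1 + n).+1 = n.+1 + n.+1)%N; last by lia.
rewrite (@hankelB_odd v w1 w) // (@hankelB_even v w1 w) //.
by field; rewrite (hankelA_neq0 _ (fun m => hv _)) hankelB_neq0.
Qed.

Lemma ratioA_even v w n : (forall m, v m != 0) -> w =1 (fun m => v (2 * m + 1)%N) ->
  ratioA v (n + n) = (-1) ^+ n * (v 0%N / v 1%N) * ratioA w n.
Proof.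
move=> hv e; have hw m : w m != 0 by rewrite e.
rewrite /ratioA -addSn (@hankelA_odd v (fun m => w m.+1)); last by move=> m; rewrite e; congr v; lia.
rewrite (@hankelA_even v w) // hankelB_shift_sqr // e.
by rewrite -signr_odd; case: (odd n); rewrite ?expr0 ?expr1;
  field; rewrite ?hankelA_neq0 ?hv ?oppr_eq0 ?oner_eq0.
Qed.

Lemma ratioA_odd v w n : (forall m, v m != 0) -> w =1 (fun m => v (2 * m + 1)%N) ->
  ratioA v (n.+1 + n) = (-1) ^+ n.+1 * (v 1%N / v 0%N) * ratioA w n.
Proof.
move=> hv e; have hw m : w m != 0 by rewrite e.
rewrite /ratioA (_ : (n.+1 + n).+1 = n.+1 + n.+1)%N; last by lia.
rewrite (@hankelA_odd v (fun m => w m.+1)); last by move=> m; rewrite e; congr v; lia.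
rewrite (@hankelA_even v w) // hankelB_shift_sqr // e exprS.
by rewrite -signr_odd; case: (odd n); rewrite ?expr0 ?expr1;
  field; rewrite ?hankelA_neq0 ?hv ?oppr_eq0 ?oner_eq0.
Qed.

Lemma ratioA_mulS v n : (forall m, v m != 0) ->
  ratioA v n * ratioA v n.+1 = - ratioB (fun m => v m.+1) n ^+ 2.
Proof.
move=> hv; have e : ratioA v n * ratioA v n.+1 =
    (hankelA v n.+1 * hankelA v n.+2) / (hankelA v n * hankelA v n.+1).
  by rewrite /ratioA; field; rewrite !hankelA_neq0.
rewrite e !hankelA_mulS /ratioB exprS.
by rewrite -signr_odd; case: (odd n); rewrite ?expr0 ?expr1;
  field; rewrite ?hankelB_neq0 ?hv ?oppr_eq0 ?oner_eq0.
Qed.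

Lemma quotB_odd v n : (forall m, v m != 0) -> quotB v (2 * n + 1) = - quotB v (2 * n).
Proof.
move=> hv; set w1 := fun m => v (2 * m)%N; set w2 := fun m => v (2 * m + 2)%N.
have hw1 m : w1 m != 0 by apply: hv.
have hw2 m : w2 m != 0 by apply: hv.
have -> : (2 * n + 1 = (n + n).+1)%N by lia.
have -> : (2 * n = n + n)%N by lia.
rewrite !quotB_ratioB // (_ : (n + n).+2 = n.+1 + n.+1)%N; last by lia.
rewrite -addSn (@ratioB_even v w1) // (@ratioB_odd v w2) // (@ratioB_even v w1) //.
(* [T_(2n+1) / T_(2n)] is [ratioA w1 n * ratioA w1 n.+1 / ratioB w2 n ^+ 2] *)
have := ratioA_mulS n hw1; rewrite (@eq_ratioB _ w2) => [mulS|m]; last by congr v; lia.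
have -> : ratioA w1 n.+1 = - ratioB w2 n ^+ 2 / ratioA w1 n.
  by rewrite -mulS; field; rewrite ratioA_neq0.
by field; rewrite ratioA_neq0 // ratioB_neq0.
Qed.

Lemma quotB_mul4 v n : (forall m, v m != 0) ->
  quotB v (4 * n) = (-1) ^+ n * (v 2%N / v 0%N).
Proof.
move=> hv; set w1 := fun m => v (2 * m)%N; set w2 := fun m => v (2 * m + 2)%N.
set u := fun m => v (4 * m + 2)%N.
have hw1 m : w1 m != 0 by apply: hv.
have hw2 m : w2 m != 0 by apply: hv.
have hu m : u m != 0 by apply: hv.
rewrite quotB_ratioB // (_ : (4 * n).+1 = (n + n).+1 + (n + n))%N; last by lia.
rewrite (@ratioB_odd v w2) // (_ : 4 * n = (n + n) + (n + n))%N; last by lia.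
rewrite (@ratioB_even v w1) // (@ratioB_even w2 u) => [|//|m]; last by congr v; lia.
rewrite (@ratioA_even w1 u) => [|//|m]; last by congr v; lia.
rewrite /w1 /= muln0 muln1.
by rewrite -signr_odd; case: (odd n); rewrite ?expr0 ?expr1;
  field; rewrite ?ratioA_neq0 ?hv ?oppr_eq0 ?oner_eq0.
Qed.

Lemma ratioB_pow2 r w w' m : (forall x, w x != 0) ->
  w' =1 (fun x => w (2 ^ r * x + 2 ^ r.+1 - 2)%N) ->
  ratioB w (2 ^ r * m.+1).-1 = ratioB w' m.
Proof.
elim: r w w' => [|r IH] w w' hw e.
  by rewrite expn0 mul1n /=; apply: eq_ratioB => x; rewrite e; congr w; lia.
have p_gt0 := expn_gt0 2 r; rewrite /= in p_gt0.
rewrite (_ : (2 ^ r.+1 * m.+1).-1 = (2 ^ r * m.+1).-1.+1 + (2 ^ r * m.+1).-1)%N; last first.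
  by rewrite expnS; move: (2 ^ r)%N p_gt0 => p; nia.
rewrite (@ratioB_odd w (fun x => w (2 * x + 2)%N)) //.
by apply: IH => // x; rewrite e; congr w; rewrite !expnS; move: (2 ^ r)%N p_gt0 => p; nia.
Qed.

Lemma ratioA_pow2 r w w' m : (forall x, w x != 0) ->
  w' =1 (fun x => w (2 ^ r * x + 2 ^ r - 1)%N) ->
  ratioA w (2 ^ r * m.+1).-1 =
  (-1) ^+ (m.+1 * (2 ^ r).-1) * (w (2 ^ r - 1)%N / w 0%N) * ratioA w' m.
Proof.
elim: r w w' => [|r IH] w w' hw e.
  rewrite expn0 mul1n /= muln0 expr0 mul1r subnn divff // mul1r.
  by apply: eq_ratioA => x; rewrite e; congr w; lia.
have p_gt0 := expn_gt0 2 r; rewrite /= in p_gt0.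
rewrite (_ : (2 ^ r.+1 * m.+1).-1 = (2 ^ r * m.+1).-1.+1 + (2 ^ r * m.+1).-1)%N; last first.
  by rewrite expnS; move: (2 ^ r)%N p_gt0 => p; nia.
set u := fun x => w (2 * x + 1)%N.
rewrite (@ratioA_odd w u) // (IH u w') => [|x|x]; last 2 first.
- exact: hw.
- by rewrite e /u; congr w; rewrite !expnS; move: (2 ^ r)%N p_gt0 => p; nia.
rewrite /u (_ : (2 * (2 ^ r - 1) + 1 = 2 ^ r.+1 - 1)%N); last first.
  by rewrite expnS; move: (2 ^ r)%N p_gt0 => p; nia.
have sign : (-1) ^+ (2 ^ r * m.+1).-1.+1 * (-1) ^+ (m.+1 * (2 ^ r).-1) =
            (-1) ^+ (m.+1 * (2 ^ r.+1).-1) :> R.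
  by rewrite -exprD expnS; congr (_ ^+ _); move: (2 ^ r)%N p_gt0 => p; nia.
by rewrite muln0 add0n -sign; field; rewrite !hw.
Qed.

Lemma ratioB_pow2_odd v r n : (forall m, v m != 0) ->
  ratioB v (2 ^ r.+1 * (n + n).+1).-1 =
  ratioA (fun x => v (2 ^ r.+2 * x + 2 ^ r.+2 - 2)%N) n.
Proof.
move=> hv; have p_gt0 := expn_gt0 2 r; rewrite /= in p_gt0.
rewrite (@ratioB_pow2 r.+1 v (fun x => v (2 ^ r.+1 * x + 2 ^ r.+2 - 2)%N)) //.
by apply: ratioB_even => // x; congr v; rewrite !expnS; move: (2 ^ r)%N p_gt0 => p; nia.
Qed.

Lemma ratioA_pow2_odd v r n : (forall m, v m != 0) ->
  ratioA v (2 ^ r.+1 * (n + n).+1).-1 =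
  (-1) ^+ n.+1 * (v (2 ^ r.+1 - 1)%N ^+ 2 / (v 0%N * v (2 ^ r.+2 - 1)%N)) *
  ratioA (fun x => v (2 ^ r.+2 * x + 2 ^ r.+2 - 1)%N) n.
Proof.
move=> hv; have p_gt0 := expn_gt0 2 r; rewrite /= in p_gt0.
set w := fun x => v (2 ^ r.+1 * x + 2 ^ r.+1 - 1)%N.
rewrite (@ratioA_pow2 r.+1 v w) //.
rewrite (@ratioA_even w (fun x => v (2 ^ r.+2 * x + 2 ^ r.+2 - 1)%N)) => [|x|x]; last 2 first.
- exact: hv.
- by rewrite /w; congr v; rewrite !expnS; move: (2 ^ r)%N p_gt0 => p; nia.
have -> : (-1) ^+ ((n + n).+1 * (2 ^ r.+1).-1) = -1 :> R.
  rewrite -signr_odd oddM /= (_ : (2 ^ r.+1).-1 = (2 ^ r - 1).*2.+1)%N.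
    by rewrite /= odd_double /= addnn odd_double /= expr1.
  by rewrite expnS -muln2; move: (2 ^ r)%N p_gt0 => p; lia.
rewrite /w /= muln0 muln1 add0n (_ : 2 ^ r.+1 + 2 ^ r.+1 - 1 = 2 ^ r.+2 - 1)%N; last first.
  by rewrite !expnS; move: (2 ^ r)%N p_gt0 => p; lia.
by rewrite exprS; field; rewrite !hv.
Qed.

Lemma quotB_pow2 v k n : (2 <= k)%N -> (forall m, v m != 0) ->
  quotB v (2 ^ k.+1 * n + 2 ^ k - 1) =
  (-1) ^+ n * (v 0%N * v (2 ^ k.+1 - 2)%N / v (2 ^ k - 2)%N ^+ 2).
Proof.
case: k => [|[|r]] // _ hv; have p_gt0 := expn_gt0 2 r; rewrite /= in p_gt0.
set j := (2 ^ r.+1 * (n + n).+1).-1.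
have -> : (2 ^ r.+3 * n + 2 ^ r.+2 - 1 = 2 * j + 1)%N.
  by rewrite /j !expnS; move: (2 ^ r)%N p_gt0 => p; nia.
rewrite quotB_odd // quotB_ratioB // (_ : (2 * j).+1 = (2 ^ r.+2 * (n + n).+1).-1)%N; last first.
  by rewrite /j !expnS; move: (2 ^ r)%N p_gt0 => p; nia.
rewrite ratioB_pow2_odd // (_ : 2 * j = j + j)%N; last by lia.
rewrite (@ratioB_even v (fun m => v (2 * m)%N)) // ratioA_pow2_odd //.
rewrite (@eq_ratioA _ (fun x => v (2 ^ r.+3 * x + 2 ^ r.+3 - 2)%N)) => [|x]; last first.
  by congr v; rewrite !expnS; move: (2 ^ r)%N p_gt0 => p; nia.
rewrite muln0 (_ : 2 * (2 ^ r.+1 - 1) = 2 ^ r.+2 - 2)%N; last first.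
  by rewrite !expnS; move: (2 ^ r)%N p_gt0 => p; lia.
rewrite (_ : 2 * (2 ^ r.+2 - 1) = 2 ^ r.+3 - 2)%N; last first.
  by rewrite !expnS; move: (2 ^ r)%N p_gt0 => p; lia.
rewrite exprS -signr_odd; case: (odd n); rewrite ?expr0 ?expr1;
  by field; rewrite ?ratioA_neq0 // ?hv ?oppr_eq0 ?oner_eq0.
Qed.

End LacunaryHankel.

Lemma xvar_neq0 N k : (k < N)%N -> xvar N k != 0.
Proof.
move=> lt_kN; rewrite /xvar insubT tofrac_eq0.
apply/eqP => /(congr1 (mcoeff U_(Ordinal lt_kN))).
by rewrite mcoeffX eqxx mcoeff0 => /eqP; rewrite oner_eq0.
Qed.

(* x_(m+1), padded with 1 beyond the N indeterminates so that it never vanishes *)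
Definition xshift N m : RatF N := if (m.+1 < N)%N then xvar N m.+1 else 1.

Lemma xshift_neq0 N m : xshift N m != 0.
Proof. by rewrite /xshift; case: ifP => [/xvar_neq0|] //; rewrite oner_eq0. Qed.

Lemma xshift_xvar N m : (m.+1 < N)%N -> xshift N m = xvar N m.+1.
Proof. by rewrite /xshift => ->. Qed.

Lemma Dh_hankelB N n : (n + n <= N)%N -> Dh N n = hankelB (xshift N) n.
Proof.
move=> le_nN; congr (\det _); apply/matrixP => i j.
rewrite !mxE /pow2m2_seq /aseq addn1 /xshift.
by case: ifP => // _; rewrite ifT //; have := ltn_ord i; have := ltn_ord j; lia.
Qed.

Lemma Th_quotB N n : (2 * n + 3 < N)%N -> Th N n = quotB (xshift N) n.
Proof. by move=> lt_nN; rewrite /Th /quotB !Dh_hankelB //; lia. Qed.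

Theorem theorem5p7 :
  (forall N n : nat, (2 * (2 * n + 1) + 3 < N)%N ->
     Th N (2 * n + 1) = - Th N (2 * n)) /\
  (forall N n : nat, (2 * (4 * n) + 3 < N)%N ->
     Th N (4 * n) = (-1) ^+ n * (xvar N 3 / xvar N 1)) /\
  (forall N k n : nat, (2 <= k)%N ->
     (2 * (2 ^ k.+1 * n + 2 ^ k - 1) + 3 < N)%N ->
     Th N (2 ^ k.+1 * n + 2 ^ k - 1) =
       (-1) ^+ n * (xvar N 1 * xvar N (2 ^ k.+1 - 1) / xvar N (2 ^ k - 1) ^+ 2)).
Proof.
split; [|split].
- move=> N n lt_nN; rewrite !Th_quotB ?quotB_odd //; [exact: (@xshift_neq0 N) | lia].
- move=> N n lt_nN; rewrite Th_quotB ?quotB_mul4 ?xshift_xvar //; [lia | lia | exact: (@xshift_neq0 N)].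
- move=> N k n le2k lt_nN; have le4k : (4 <= 2 ^ k)%N by rewrite -[4%N]/(2 ^ 2)%N leq_exp2l.
  rewrite Th_quotB ?quotB_pow2 //; [|exact: (@xshift_neq0 N)].
  have -> : (2 ^ k.+1 - 1 = (2 ^ k.+1 - 2).+1)%N by rewrite expnS; lia.
  have -> : (2 ^ k - 1 = (2 ^ k - 2).+1)%N by lia.
  by rewrite !xshift_xvar //; move: lt_nN; rewrite expnS; lia.
Qed.
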